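(* Let $r$ be a positive integer and $(S,\mathcal T)$ a feasible instance of test set with redundancy $r$, with $|S|=n$. Let $\mathcal T^*$ be an optimal (minimum-cardinality) $r$-test set, $m^*=|\mathcal T^*|$, let $\#_0=rn(n-1)/2$, and let $\#_B$ be the number of item pairs differentiated by exactly $r$ tests in $\mathcal T^*$; assume $\#_B>0$. Then the size of every solution returned by the set cover greedy algorithm SGA (with any tie-breaking) is at most $$\Big(\ln\#_0-\frac{1}{r+1}\ln\frac{\#_0}{\#_B}+\frac{r}{r+1}\ln(r+1)+1\Big)m^*+1.$$
   Context: Test set with redundancy $r\in\mathbb Z^+$: the input is a finite set of items $S$ with $|S|=n$ and a collection $\mathcal T$ of subsets of $S$ (called tests); it is assumed that there are no two tests $T_1,T_2\in\mathcal T$ with $T_1=S-T_2$. An item pair is a set $\{i,j\}$ of two different items of $S$. A test $T$ differentiates an item pair $a$ if $|T\cap a|=1$; for a family $\mathcal F$ of tests, $\perp(a,\mathcal F)$ denotes the number of tests in $\mathcal F$ that differentiate $a$. A family $\mathcal T'\subseteq\mathcal T$ is an $r$-test set of $S$ if every item pair is differentiated by at least $r$ different tests of $\mathcal T'$; the goal is to find an $r$-test set of minimum cardinality (the instance is feasible if some $r$-test set exists). For a family $\bar{\mathcal T}\subseteq\mathcal T$ define the differentiation measure $\#(\bar{\mathcal T})=\sum_a\max(r-\perp(a,\bar{\mathcal T}),0)$, the sum over all item pairs $a$; note $\#(\varnothing)=rn(n-1)/2$. The set cover greedy algorithm SGA: start with $\bar{\mathcal T}=\varnothing$; while $\#(\bar{\mathcal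 T})>0$, select a test $T\in\mathcal T-\bar{\mathcal T}$ minimizing $\#(\bar{\mathcal T}\cup\{T\})$ and set $\bar{\mathcal T}\leftarrow\bar{\mathcal T}\cup\{T\}$; return $\bar{\mathcal T}$. *)

From Stdlib Require Import Reals.
From mathcomp Require Import all_boot.

Set Implicit Arguments.
Unset Strict Implicit.
Unset Printing Implicit Defensive.

Section TestSet.
Variable S : finType.

Definition item_pair (a : {set S}) : bool := #|a| == 2.

Definition differentiates (T a : {set S}) : bool := #|T :&: a| == 1.

Definition perp (a : {set S}) (F : {set {set S}}) : nat :=
  #|[set T in F | differentiates T a]|.

Definition is_r_test_set (TT : {set {set S}}) (r : nat) (F : {set {set S}}) : Prop :=
  F \subset TT /\ forall a : {set S}, item_pair a -> r <= perp a F.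

(* differentiation measure  #(F) = sum_a max(r - perp(a,F), 0)
   (truncated nat subtraction is exactly max(_,0)) *)
Definition measure (r : nat) (F : {set {set S}}) : nat :=
  \sum_(a : {set S} | item_pair a) (r - perp a F).

(* s is a complete run of the greedy algorithm SGA (with some tie-breaking):
   s lists the selected tests in selection order. *)
Definition sga_run (TT : {set {set S}}) (r : nat) (s : seq {set S}) : Prop :=
  (forall i, i < size s ->
     let F := [set X in take i s] in
     0 < measure r F /\
     nth set0 s i \in TT :\: F /\
     (forall T', T' \in TT :\: F ->
        measure r (nth set0 s i |: F) <= measure r (T' |: F))) /\
  measure r [set X in s] = 0.

End TestSet.

Section Bound.
Local Open Scope R_scope.
Definition diff0 (r n : nat) : R := INR r * INR n * (INR n - 1) / 2.
Definition sga_bound (r n m dB : nat) : R :=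
  (ln (diff0 r n) - / (INR r + 1) * ln (diff0 r n / INR dB)
   + INR r / (INR r + 1) * ln (INR r + 1) + 1) * INR m + 1.
End Bound.

From Pilot Require Import Defs.
From Stdlib Require Import Reals Lra Lia.
From mathcomp Require Import all_boot zify.

Set Implicit Arguments.
Unset Strict Implicit.
Unset Printing Implicit Defensive.

(* Let D_i be the differentiation measure after i greedy steps, g_i = D_i - D_(i+1) the
   gain of step i, m = |T*| and x = #_B.  The tests of T* not chosen yet together gain at
   least D_i + N_i, where N_i counts the deficient pairs that T* differentiates more than
   r times, while D_i <= r x + r N_i.  Since the greedy test gains at least as much as
   each of them, D_i <= m g_i and (r+1) D_i <= r m g_i + r x.  The first inequality makes
   D shrink by a factor 1 - 1/m per step, the second makes (r+1) D - r x shrink by a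
   factor 1 - (r+1)/(r m).  Counting the steps with D > r x by the second and the
   remaining ones by the first, using ln (1 - c) <= - c, gives the bound. *)

Section GreedyStep.
Variables (S : finType) (r : nat).
Implicit Types (a T : {set S}) (A F : {set {set S}}).

Definition gain T F : nat :=
  \sum_(a | item_pair a) (differentiates T a && (perp a F < r)).

Lemma perpE a F : perp a F = \sum_(T in F) differentiates T a.
Proof.
rewrite /perp -sum1dep_card big_mkcondr /=.
by apply: eq_bigr => T _; case: differentiates.
Qed.

Lemma perp_setU1 a T F : T \notin F ->
  perp a (T |: F) = perp a F + differentiates T a.
Proof. by move=> TF; rewrite !perpE big_setU1 //= addnC. Qed.

Lemma measure_setU1 T F : T \notin F ->
  measure r F = measure r (T |: F) + gain T F.
Proof.
move=> TF; rewrite /measure /gain -big_split /=; apply: eq_bigr => a _.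
by rewrite perp_setU1 //; case: differentiates; case: (ltnP (perp a F) r) => /=; lia.
Qed.

Lemma sum_gain A F :
  \sum_(T in A) gain T F = \sum_(a | item_pair a) (perp a F < r) * perp a A.
Proof.
rewrite exchange_big /=; apply: eq_bigr => a _; rewrite (perpE a A) big_distrr /=.
by apply: eq_bigr => T _; case: differentiates; case: (perp a F < r).
Qed.

Lemma perp_le_card a F : perp a F <= #|F|.
Proof. by apply/subset_leq_card/subsetP => T; rewrite inE => /andP []. Qed.

Lemma perp_le_setD a A F : perp a A <= perp a (A :\: F) + perp a F.
Proof.
rewrite !perpE (big_setID F) /= addnC leq_add2l.
by rewrite [X in _ <= X](big_setID A) /= setIC leq_addr.
Qed.

Variables (TT Tstar : {set {set S}}).
Hypotheses (Tstar_sub : Tstar \subset TT)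
           (Tstar_cover : forall a, item_pair a -> r <= perp a Tstar).

Definition tight_pairs : {set {set S}} :=
  [set a | item_pair a && (perp a Tstar == r)].

Definition deficient_loose F : nat :=
  \sum_(a | item_pair a) ((perp a F < r) && (perp a Tstar != r)).

Lemma card_tight_pairs :
  #|tight_pairs| = \sum_(a | item_pair a) (perp a Tstar == r).
Proof. by rewrite -sum1dep_card big_mkcondr /=; apply: eq_bigr => a _; case: eqP. Qed.

Lemma measure_add_loose_le F :
  measure r F + deficient_loose F <= \sum_(T in Tstar :\: F) gain T F.
Proof.
rewrite sum_gain /measure -big_split /=; apply: leq_sum => a pa.
have := Tstar_cover pa; have := perp_le_setD a Tstar F.
by case: (ltnP (perp a F) r) => /=; case: (eqVneq (perp a Tstar) r) => /=; lia.
Qed.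

Lemma measure_le_tight_loose F :
  measure r F <= r * #|tight_pairs| + r * deficient_loose F.
Proof.
rewrite card_tight_pairs /measure /deficient_loose !big_distrr -big_split /=.
apply: leq_sum => a _; case: (eqVneq (perp a Tstar) r) => /= _;
  by case: (ltnP (perp a F) r) => /=; lia.
Qed.

Variables (F : {set {set S}}) (T0 : {set S}).
Hypotheses (T0_new : T0 \in TT :\: F)
  (T0_greedy : forall T, T \in TT :\: F -> measure r (T0 |: F) <= measure r (T |: F)).

Lemma greedy_gain_max T : T \in Tstar :\: F -> gain T F <= gain T0 F.
Proof.
case/setDP=> TTstar TF; have [_ T0F] := setDP T0_new.
have T_new : T \in TT :\: F by apply/setDP; split; first exact: (subsetP Tstar_sub).
have := T0_greedy T_new; have := measure_setU1 TF; have := measure_setU1 T0F; lia.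
Qed.

Lemma greedy_step_bounds :
  measure r F <= #|Tstar| * gain T0 F /\
  r.+1 * measure r F <= r * (#|Tstar| * gain T0 F) + r * #|tight_pairs|.
Proof.
have sum_le : \sum_(T in Tstar :\: F) gain T F <= #|Tstar| * gain T0 F.
  apply: leq_trans (_ : \sum_(T in Tstar :\: F) gain T0 F <= _).
    exact: leq_sum greedy_gain_max.
  by rewrite sum_nat_const leq_mul2r subset_leq_card ?subsetDl ?orbT.
have := measure_add_loose_le F; have := measure_le_tight_loose F.
split; nia.
Qed.

End GreedyStep.

Section LogDecay.
Local Open Scope R_scope.

Lemma INR_leq (p q : nat) : (p <= q)%N -> INR p <= INR q.
Proof. by move/leP/le_INR. Qed.

Lemma INR_ltn (p q : nat) : (p < q)%N -> INR p < INR q.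
Proof. by move/ltP/lt_INR. Qed.

Lemma INR_gt0 (p : nat) : (0 < p)%N -> 0 < INR p.
Proof. by move/ltP/lt_0_INR. Qed.

Lemma INR_ge1 (p : nat) : (0 < p)%N -> 1 <= INR p.
Proof. by move/leP/(le_INR 1). Qed.

Lemma ln_le x y : 0 < x -> x <= y -> ln x <= ln y.
Proof.
move=> x_gt0 /Rle_lt_or_eq_dec [/(ln_increasing _ _ x_gt0)/Rlt_le // | ->].
exact: Rle_refl.
Qed.

Lemma ln_decay u v c : 0 < u -> 0 < v -> v <= (1 - c) * u -> c <= ln u - ln v.
Proof.
move=> u_gt0 v_gt0 v_le.
have c_lt1 : 0 < 1 - c by nra.
have : ln v <= ln (1 - c) + ln u by rewrite -ln_mult //; exact: ln_le.
have : ln (1 - c) <= - c.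
  by rewrite -[X in _ <= X]ln_exp; apply: ln_le => //; have := exp_ineq1_le (- c); lra.
lra.
Qed.

Lemma ln_geometric_decay (u : nat -> R) c t :
  (forall i, (i <= t)%N -> 0 < u i) ->
  (forall i, (i < t)%N -> u i.+1 <= (1 - c) * u i) ->
  c * INR t <= ln (u 0%N) - ln (u t).
Proof.
elim: t => [|t IH] u_gt0 u_decay; first by rewrite Rmult_0_r; lra.
have := IH (fun i it => u_gt0 i (leqW it)) (fun i it => u_decay i (ltnW it)).
have := ln_decay (u_gt0 t (leqnSn t)) (u_gt0 t.+1 (leqnn _)) (u_decay t (ltnSn t)).
rewrite S_INR; lra.
Qed.

End LogDecay.

Section GreedyRecurrence.
Local Open Scope R_scope.
Variables (r m x P k : nat) (D g : nat -> nat).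
Hypotheses (r_gt0 : (0 < r)%N) (m_gt0 : (0 < m)%N)
           (x_gt0 : (0 < x)%N) (x_le_P : (x <= P)%N).
Hypothesis D0 : D 0%N = (r * P)%N.
Hypothesis D_gt0 : forall i, (i < k)%N -> (0 < D i)%N.
Hypothesis D_step : forall i, (i < k)%N -> D i = (D i.+1 + g i)%N.
Hypothesis D_le_gain : forall i, (i < k)%N -> (D i <= m * g i)%N.
Hypothesis D_le_gain_tight :
  forall i, (i < k)%N -> (r.+1 * D i <= r * (m * g i) + r * x)%N.

Let r_ge1 : 1 <= INR r. Proof. exact: INR_ge1. Qed.
Let m_ge1 : 1 <= INR m. Proof. exact: INR_ge1. Qed.
Let x_ge1 : 1 <= INR x. Proof. exact: INR_ge1. Qed.

Let D_stepR i : (i < k)%N -> INR (D i) = INR (D i.+1) + INR (g i).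
Proof. by move=> ik; rewrite (D_step ik) plus_INR. Qed.

Let D_le_gainR i : (i < k)%N -> INR (D i) <= INR m * INR (g i).
Proof. by move=> ik; rewrite -mult_INR multE; apply/INR_leq/D_le_gain. Qed.

Let D_le_gain_tightR i : (i < k)%N ->
  (INR r + 1) * INR (D i) <= INR r * (INR m * INR (g i)) + INR r * INR x.
Proof.
move=> ik; rewrite -S_INR -!mult_INR -plus_INR multE plusE.
exact/INR_leq/D_le_gain_tight.
Qed.

Lemma D_decay i : (i < k)%N -> INR (D i.+1) <= (1 - / INR m) * INR (D i).
Proof.
move=> ik; apply: (Rmult_le_reg_l (INR m)); first lra.
have -> : INR m * ((1 - / INR m) * INR (D i)) = (INR m - 1) * INR (D i) by field; lra.
by move: (D_le_gainR ik); rewrite (D_stepR ik) => le; nra.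
Qed.

Let excess i := (INR r + 1) * INR (D i) - INR r * INR x.

Lemma excess_decay i : (i < k)%N ->
  excess i.+1 <= (1 - (INR r + 1) / (INR r * INR m)) * excess i.
Proof.
move=> ik; apply: (Rmult_le_reg_l (INR r * INR m)); first nra.
have -> : INR r * INR m * ((1 - (INR r + 1) / (INR r * INR m)) * excess i)
          = (INR r * INR m - INR r - 1) * excess i by field; lra.
by move: (D_le_gain_tightR ik); rewrite /excess (D_stepR ik) => le; nra.
Qed.

Lemma phase1_bound j : (j <= k)%N -> (forall i, (i < j)%N -> (r * x < D i)%N) ->
  INR j <= 1 + INR r * INR m / (INR r + 1) *
                 (ln ((INR r + 1) * INR (r * P)) - ln (INR r * INR r * INR x)).
Proof.
move=> jk above.
have rx_le_Z : INR r * INR x <= INR (r * P).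
  by rewrite -mult_INR; apply/INR_leq; rewrite leq_mul2l x_le_P orbT.
have coef_ge0 : 0 <= INR r * INR m / (INR r + 1).
  by apply: Rmult_le_pos; [nra | apply/Rlt_le/Rinv_0_lt_compat; lra].
case: j jk above => [|j] jk above.
  have : ln (INR r * INR r * INR x) <= ln ((INR r + 1) * INR (r * P)) by apply: ln_le; nra.
  by rewrite /=; nra.
have excess_big i : (i <= j)%N -> INR r * INR r * INR x < excess i.
  move=> ij; have := INR_ltn (above i ij); rewrite mult_INR /excess; nra.
have decay : (INR r + 1) / (INR r * INR m) * INR j <= ln (excess 0%N) - ln (excess j).
  apply: ln_geometric_decay => i ij.
    by have := excess_big i ij; nra.
  by apply: excess_decay; apply: leq_trans jk; rewrite ltnS ltnW.
have : ln (excess 0%N) <= ln ((INR r + 1) * INR (r * P)).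
  by apply: ln_le; [have := excess_big 0%N isT; nra | rewrite /excess D0; nra].
have : ln (INR r * INR r * INR x) < ln (excess j).
  by apply: ln_increasing; [nra | exact: excess_big].
move=> ln_excess_j ln_excess_0.
rewrite S_INR.
have -> : INR j = INR r * INR m / (INR r + 1) * ((INR r + 1) / (INR r * INR m) * INR j)
  by field; lra.
rewrite Rplus_comm; apply/Rplus_le_compat_l/Rmult_le_compat_l => //; lra.
Qed.

Lemma phase2_bound j : (j < k)%N -> (D j <= r * x)%N ->
  INR k <= INR j + 1 + INR m * ln (INR r * INR x).
Proof.
move=> jk below; set t := (k - j.+1)%N.
have k_eq : k = (j + t).+1 by rewrite /t; lia.
have decay : / INR m * INR t <= ln (INR (D (j + 0)%N)) - ln (INR (D (j + t)%N)).
  apply: (ln_geometric_decay (u := fun i => INR (D (j + i)))) => i it.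
    by apply/INR_gt0/D_gt0; lia.
  by rewrite addnS; apply: D_decay; lia.
rewrite addn0 in decay.
have : 0 <= ln (INR (D (j + t)%N)).
  by rewrite -ln_1; apply: ln_le; [lra | apply/INR_ge1/D_gt0; lia].
have : ln (INR (D j)) <= ln (INR r * INR x).
  by apply: ln_le; [apply/INR_gt0/D_gt0 | rewrite -mult_INR multE; apply: INR_leq].
move=> ln_Dj ln_Dt_ge0.
have : INR t <= INR m * ln (INR r * INR x).
  apply: (Rmult_le_reg_l (/ INR m)); first by apply: Rinv_0_lt_compat; lra.
  by rewrite -Rmult_assoc Rinv_l ?Rmult_1_l; lra.
by rewrite k_eq S_INR plus_INR; lra.
Qed.

Theorem greedy_recurrence_bound :
  INR k <= (ln (INR (r * P)) - / (INR r + 1) * ln (INR (r * P) / INR x)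
            + INR r / (INR r + 1) * ln (INR r + 1) + 1) * INR m + 1.
Proof.
have stop_exists : exists j, (j == k) || (D j <= r * x)%N by exists k; rewrite eqxx.
case: (ex_minnP stop_exists) => j j_stop j_min.
have jk : (j <= k)%N by apply: j_min; rewrite eqxx.
have above i : (i < j)%N -> (r * x < D i)%N.
  move=> ij; rewrite ltnNge; apply/negP => Di_le.
  by have := j_min i; rewrite Di_le orbT leqNgt ij => /(_ isT).
have rx_le_Z : INR r * INR x <= INR (r * P).
  by rewrite -mult_INR; apply/INR_leq; rewrite leq_mul2l x_le_P orbT.
have ln_rx_ge0 : 0 <= ln (INR r * INR x) by rewrite -ln_1; apply: ln_le; nra.
have phase1 := phase1_bound jk above.
have phase2 : INR k <= INR j + 1 + INR m * ln (INR r * INR x).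
  move: j_stop; case: (eqVneq j k) => [<- _ | j_ne_k /= Dj_le]; first by nra.
  by apply: phase2_bound; rewrite // ltn_neqAle j_ne_k.
have ln_rZ : ln ((INR r + 1) * INR (r * P)) = ln (INR r + 1) + ln (INR (r * P)).
  by apply: ln_mult; nra.
have ln_rrx : ln (INR r * INR r * INR x) = ln (INR r) + ln (INR r) + ln (INR x).
  by rewrite !ln_mult; nra.
have ln_rx : ln (INR r * INR x) = ln (INR r) + ln (INR x) by apply: ln_mult; lra.
have ln_Zx : ln (INR (r * P) / INR x) = ln (INR (r * P)) - ln (INR x).
  by rewrite /Rdiv ln_mult ?ln_Rinv //; [lra | nra | apply: Rinv_0_lt_compat; lra].
rewrite ln_rZ ln_rrx in phase1; rewrite ln_rx in phase2; rewrite ln_Zx.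
move: phase1 phase2.
set lr := ln (INR r); set lx := ln (INR x); set lz := ln (INR (r * P)).
set l1 := ln (INR r + 1) => phase1 phase2.
have lr_ge0 : 0 <= lr by rewrite -ln_1; apply: ln_le; lra.
have lr_term_ge0 : 0 <= INR m * (INR r - 1) * lr / (INR r + 1).
  apply: Rmult_le_pos; last by apply/Rlt_le/Rinv_0_lt_compat; lra.
  by apply: Rmult_le_pos => //; nra.
have gap : (lz - / (INR r + 1) * (lz - lx) + INR r / (INR r + 1) * l1 + 1) * INR m + 1
    - (2 + INR r * INR m / (INR r + 1) * (l1 + lz - (lr + lr + lx)) + INR m * (lr + lx))
    = (INR m - 1) + INR m * (INR r - 1) * lr / (INR r + 1) by field; lra.
lra.
Qed.

End GreedyRecurrence.

Lemma set_rcons (T : finType) (s : seq T) (y : T) :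
  [set X in rcons s y] = y |: [set X in s].
Proof. by apply/setP => z; rewrite !inE mem_rcons in_cons. Qed.

Section ItemPairs.
Variable S : finType.

Lemma card_item_pairs : 2 * #|[set a : {set S} | item_pair a]| = #|S| * #|S|.-1.
Proof. by rewrite /item_pair card_draws -mul_bin_diag bin1. Qed.

Lemma measure_set0 r :
  measure r (set0 : {set {set S}}) = r * #|[set a : {set S} | item_pair a]|.
Proof.
rewrite /measure (eq_bigr (fun=> r)) => [|a _]; last by rewrite perpE big_set0 subn0.
by rewrite sum_nat_cond_const mulnC.
Qed.

Local Open Scope R_scope.

Lemma diff0_item_pairs (r : nat) :
  Defs.diff0 r #|S| = INR (r * #|[set a : {set S} | item_pair a]|)%N.
Proof.
rewrite /Defs.diff0 mult_INR; move: card_item_pairs.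
set P := #|[set a : {set S} | item_pair a]|; case: #|S| => [|n] pairs.
  have -> : P = 0%N by lia.
  by rewrite /=; field.
have pairsR : 2 * INR P = INR n.+1 * INR n.
  by rewrite -mult_INR -[2]/(INR 2) -mult_INR !multE pairs.
have -> : INR n.+1 - 1 = INR n by rewrite S_INR; lra.
have -> : INR P = INR n.+1 * INR n / 2 by lra.
by field.
Qed.

End ItemPairs.

Theorem lemma2 (S : finType) (TT : {set {set S}}) (r : nat)
  (Tstar : {set {set S}}) (s : seq {set S}) :
  0 < r ->
  (forall T1 T2, T1 \in TT -> T2 \in TT -> T1 <> ~: T2) ->
  is_r_test_set TT r Tstar ->
  (forall F, is_r_test_set TT r F -> #|Tstar| <= #|F|) ->
  0 < #|[set a : {set S} | item_pair a && (perp a Tstar == r)]| ->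
  sga_run TT r s ->
  Rle (INR #|[set X in s]|)
      (sga_bound r #|S| #|Tstar|
         #|[set a : {set S} | item_pair a && (perp a Tstar == r)]|).
Proof.
move=> r_gt0 _ [Tstar_sub Tstar_cover] _ tight_gt0 [sga_step _].
pose D i := measure r [set X in take i s].
pose g i := gain r (nth set0 s i) [set X in take i s].
have tight_le : #|tight_pairs r Tstar| <= #|[set a : {set S} | item_pair a]|.
  by apply/subset_leq_card/subsetP => a; rewrite !inE => /andP [].
have Tstar_gt0 : 0 < #|Tstar|.
  case/card_gt0P: tight_gt0 => a; rewrite inE => /andP [_ /eqP perp_r].
  by rewrite -perp_r in r_gt0; exact: leq_trans r_gt0 (perp_le_card a Tstar).
have step i : i < size s -> [/\ D i = D i.+1 + g i, D i <= #|Tstar| * g i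
    & r.+1 * D i <= r * (#|Tstar| * g i) + r * #|tight_pairs r Tstar|].
  move=> i_lt; have [_ [T_new T_greedy]] := sga_step i i_lt.
  have [D_le D_le_tight] := greedy_step_bounds Tstar_sub Tstar_cover T_new T_greedy.
  have [_ T_notin] := setDP T_new.
  by rewrite /D /g (take_nth set0 i_lt) set_rcons -measure_setU1.
rewrite cardsE; apply: Rle_trans (INR_leq (card_size s)) _.
rewrite /sga_bound diff0_item_pairs.
apply: (greedy_recurrence_bound (D := D) (g := g)) => //.
- by rewrite /D take0 measure_set0.
- by move=> i /sga_step [].
- by move=> i /step [].
- by move=> i /step [].
- by move=> i /step [].
Qed.
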